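(* Let $x=\prod_{n\ge1}01^n=0\,1\,0\,11\,0\,111\,0\,1111\cdots\in\{0,1\}^\omega$, and define $\varphi:\{0,1\}^+\to\{0,1\}$ by $\varphi(u)=0$ if $u\in\mathrm{Fact}(x)$ and $\varphi(u)=1$ otherwise. Then no suffix of $x$ admits a $\varphi$-ultra monochromatic factorization.
   Context: $\mathrm{Fact}(x)$ is the set of non-empty finite factors of $x$. A factorization $x'=V_0V_1V_2\cdots$ with all $V_i$ non-empty is $\varphi$-ultra monochromatic if there is a color $c$ such that for all $k\ge1$, all $0\le n_1<\cdots<n_k$ and all permutations $\sigma$ of $\{1,\dots,k\}$, $\varphi(V_{n_{\sigma(1)}}\cdots V_{n_{\sigma(k)}})=c$. *)

From Stdlib Require Import ClassicalEpsilon.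
From mathcomp Require Import all_boot all_fingroup.
Set Implicit Arguments. Unset Strict Implicit. Unset Printing Implicit Defensive.

(* Letters: false = 0, true = 1.  Infinite words are nat -> bool. *)

(* x = prod_{n>=1} 0 1^n; the first p+1 blocks have length >= p+1. *)
Definition xword (p : nat) : bool :=
  nth true (flatten [seq false :: nseq n true | n <- iota 1 p.+1]) p.

Definition subword (w : nat -> bool) (i l : nat) : seq bool :=
  [seq w (i + k) | k <- iota 0 l].

Definition inFact (w : nat -> bool) (u : seq bool) : Prop :=
  size u > 0 /\ exists i, u = subword w i (size u).

Definition phi (u : seq bool) : bool :=
  if excluded_middle_informative (inFact xword u) then false else true.

Definition wsuffix (w : nat -> bool) (m : nat) : nat -> bool := fun n => w (m + n).

Definition factorization (w : nat -> bool) (V : nat -> seq bool) : Prop :=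
  (forall i, size (V i) > 0) /\
  (forall i, V i = subword w (\sum_(j < i) size (V j)) (size (V i))).

Definition ultra_mono (col : seq bool -> bool) (V : nat -> seq bool) : Prop :=
  exists c : bool, forall (k : nat) (n : 'I_k -> nat) (s : 'S_k),
    0 < k ->
    (forall i j : 'I_k, i < j -> n i < n j) ->
    col (flatten [seq V (n (s i)) | i <- enum 'I_k]) = c.

From Stdlib Require Import ClassicalEpsilon.
From mathcomp Require Import all_boot all_fingroup zify.
Set Implicit Arguments. Unset Strict Implicit.

(* The zeros of x sit at the positions k(k+3)/2, so the runs of ones between
   consecutive zeros of x get strictly longer along x.  If A, B, C are words
   containing a zero and ABC is a factor of x, the run straddling the A|B
   border therefore precedes, and is shorter than, the run straddling B|C:
   gap A B < gap B C.  In an ultra monochromatic factorization every block is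
   a factor of x, so the colour is 0 and, for three blocks containing a zero,
   all three rotations ABC, BCA, CAB are factors of x; this yields
   gap A B < gap B C < gap C A < gap A B. *)

Definition xprefix N := flatten [seq false :: nseq n true | n <- iota 1 N].

Lemma xprefixS N : xprefix N.+1 = xprefix N ++ false :: nseq N.+1 true.
Proof. by rewrite /xprefix -[N.+1]addn1 iotaD map_cat flatten_cat /= cats0 add0n addn1. Qed.

Lemma size_xprefix N : size (xprefix N) * 2 = N * (N + 3).
Proof. by elim: N => [//|N IH]; rewrite xprefixS size_cat /= size_nseq; nia. Qed.

Lemma leq_mul_add3 i j : i <= j -> i * (i + 3) <= j * (j + 3).
Proof. by move=> le_ij; apply: leq_mul; rewrite ?leq_add2r. Qed.

Lemma nth_xprefix_false N p : p < size (xprefix N) ->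
  nth true (xprefix N) p = false <-> exists2 k, k < N & p * 2 = k * (k + 3).
Proof.
elim: N p => [//|N IH] p; have size_pre := size_xprefix N.
rewrite xprefixS nth_cat size_cat /= size_nseq => p_lt.
case: ltnP => p_pre.
  rewrite IH //; split=> -[k k_lt k_pos]; exists k => //; first lia.
  have : k != N by apply/eqP => k_eq; subst k; nia.
  lia.
case p_off: (p - size (xprefix N)) => [|r] /=.
  by split=> // _; exists N => //; lia.
rewrite -[true :: _]/(nseq N.+1 true) nth_nseq if_same; split=> // -[k k_lt k_pos].
by have := leq_mul_add3 (ltnSE k_lt); lia.
Qed.

Lemma xword_false p : xword p = false <-> exists k, p * 2 = k * (k + 3).
Proof.
have p_lt : p < size (xprefix p.+1) by have := size_xprefix p.+1; nia.
rewrite /xword -/(xprefix p.+1) (nth_xprefix_false p_lt).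
by split=> [[k _ k_pos] | [k k_pos]]; exists k => //; nia.
Qed.

Lemma xword_zero_beyond p : exists2 q, p <= q & xword q = false.
Proof. by exists (p * (p.*2 + 3)); [nia | apply/xword_false; exists p.*2; lia]. Qed.

Definition zero_run (f : nat -> bool) (p q : nat) : Prop :=
  [/\ p < q, f p = false, f q = false & forall r, p < r < q -> f r = true].

Lemma zero_run_xword_length p q k :
  zero_run xword p q -> p * 2 = k * (k + 3) -> q = p + k.+2.
Proof.
move=> [p_lt_q _ /xword_false [l q_pos] ones] p_pos.
have k_lt_l : k < l by rewrite ltnNge; apply/negP => /leq_mul_add3; lia.
have next_zero : xword (p + k.+2) = false by apply/xword_false; exists k.+1; nia.
have q_ge : p + k.+2 <= q by have := leq_mul_add3 k_lt_l; nia.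
apply/eqP; rewrite eqn_leq q_ge andbT leqNgt; apply/negP => q_gt.
by rewrite ones in next_zero; lia.
Qed.

Lemma xword_zero_runs_lengthen p q p' q' :
  zero_run xword p q -> zero_run xword p' q' -> q <= p' -> q - p < q' - p'.
Proof.
move=> run run'; case: (run) (run') => p_lt_q /xword_false [k p_pos] _ _.
case=> _ /xword_false [k' p'_pos] _ _ q_le_p'.
rewrite (zero_run_xword_length run p_pos) (zero_run_xword_length run' p'_pos).
have : k < k' by rewrite ltnNge; apply/negP => /leq_mul_add3; lia.
lia.
Qed.

(* Words are read with default letter [true]: positions past the end count as ones. *)
Definition lead_ones (u : seq bool) := index false u.
Definition trail_ones (u : seq bool) := index false (rev u).
Definition gap (u v : seq bool) := trail_ones u + lead_ones v.

Lemma nth_lead_ones (u : seq bool) : false \in u -> nth true u (lead_ones u) = false.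
Proof. exact: nth_index. Qed.

Lemma nth_before_lead_ones (u : seq bool) r : r < lead_ones u -> nth true u r = true.
Proof. by move=> /(before_find true); case: nth. Qed.

Lemma lead_ones_cat (u v : seq bool) : false \in u -> lead_ones (u ++ v) = lead_ones u.
Proof. by move=> u0; rewrite /lead_ones index_cat u0. Qed.

Lemma trail_ones_lt (u : seq bool) : false \in u -> trail_ones u < size u.
Proof. by move=> u0; rewrite -(size_rev u) index_mem mem_rev. Qed.

Lemma nth_last_zero (u : seq bool) :
  false \in u -> nth true u (size u - (trail_ones u).+1) = false.
Proof. by move=> u0; rewrite -nth_rev ?trail_ones_lt // nth_index ?mem_rev. Qed.

Lemma nth_after_last_zero (u : seq bool) r :
  size u - (trail_ones u).+1 < r -> nth true u r = true.
Proof.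
move=> r_gt; case: (ltnP r (size u)) => [r_lt | ?]; last by rewrite nth_default.
rewrite (_ : r = size u - (size u - r.+1).+1) -?nth_rev; try lia.
by apply: nth_before_lead_ones; rewrite /lead_ones -/(trail_ones u); lia.
Qed.

Lemma lead_ones_le_last_zero (u : seq bool) :
  false \in u -> lead_ones u <= size u - (trail_ones u).+1.
Proof.
move=> u0; rewrite leqNgt; apply/negP => /nth_before_lead_ones.
by rewrite nth_last_zero.
Qed.

Lemma zero_run_cat (u v : seq bool) : false \in u -> false \in v ->
  zero_run (nth true (u ++ v)) (size u - (trail_ones u).+1) (size u + lead_ones v).
Proof.
move=> u0 v0; have u_trail := trail_ones_lt u0.
split; first lia.
- by rewrite nth_cat (_ : _ < size u) ?nth_last_zero //; lia.
- by rewrite nth_cat ltnNge leq_addr /= addKn nth_lead_ones.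
move=> r /andP [r_gt r_lt]; rewrite nth_cat; case: ltnP => r_u.
  exact: nth_after_last_zero.
by apply: nth_before_lead_ones; lia.
Qed.

Lemma zero_run_shift (u v : seq bool) p q :
  zero_run (nth true v) p q -> zero_run (nth true (u ++ v)) (size u + p) (size u + q).
Proof.
have nth_shift r : nth true (u ++ v) (size u + r) = nth true v r.
  by rewrite nth_cat ltnNge leq_addr /= addKn.
case=> p_lt_q vp vq ones; split; rewrite ?nth_shift ?ltn_add2l //.
move=> r r_in; rewrite -(subnKC (_ : size u <= r)) ?nth_shift; try lia.
by apply: ones; lia.
Qed.

Lemma zero_run_subword (w : nat -> bool) i u p q :
  u = subword w i (size u) -> zero_run (nth true u) p q -> zero_run w (i + p) (i + q).
Proof.
move=> u_def; have nth_u r : r < size u -> nth true u r = w (i + r).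
  by move=> r_lt; rewrite [in LHS]u_def (nth_map 0) ?size_iota ?nth_iota.
case=> p_lt_q up uq ones.
have q_lt : q < size u by rewrite ltnNge; apply/negP => /(nth_default true); rewrite uq.
split; rewrite -?nth_u ?ltn_add2l //; try lia.
move=> r r_in; rewrite -(subnKC (_ : i <= r)) -?nth_u; try lia.
by apply: ones; lia.
Qed.

Lemma inFact_xword_gap_lt A B C :
  false \in A -> false \in B -> false \in C ->
  inFact xword (A ++ B ++ C) -> gap A B < gap B C.
Proof.
move=> A0 B0 C0 [_ [i ABC_def]].
have BC0 : false \in B ++ C by rewrite mem_cat B0.
have := zero_run_subword ABC_def (zero_run_cat A0 BC0).
rewrite lead_ones_cat // => run_AB.
have := zero_run_subword ABC_def (zero_run_shift A (zero_run_cat B0 C0)) => run_BC.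
have := xword_zero_runs_lengthen run_AB run_BC.
have := trail_ones_lt A0; have := trail_ones_lt B0; have := lead_ones_le_last_zero B0.
rewrite /gap; lia.
Qed.

Lemma mem_subword (w : nat -> bool) a l p : a <= p < a + l -> w p \in subword w a l.
Proof.
move=> p_in; apply/mapP; exists (p - a); first by rewrite mem_iota; lia.
by rewrite subnKC //; lia.
Qed.

Lemma factorization_mem w V N p : factorization w V ->
  \sum_(j < N) size (V j) <= p -> exists2 i, N <= i & w p \in V i.
Proof.
move=> [V_pos V_def] N_le; pose pos i := \sum_(j < i) size (V j).
have posS i : pos i.+1 = pos i + size (V i) by rewrite /pos big_ord_recr.
have le_pos i : i <= pos i by elim: i => // i IH; rewrite posS; have := V_pos i; lia.
have before_p : exists i, pos i <= p by exists N.
have ub i : pos i <= p -> i <= p by have := le_pos i; lia.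
case: (ex_maxnP before_p ub) => i pos_i i_max.
have p_lt : p < pos i.+1 by rewrite ltnNge; apply/negP => /i_max; lia.
exists i; first exact: i_max.
by rewrite V_def; apply: mem_subword; rewrite -/(pos i) -posS; lia.
Qed.

Lemma factorization_suffix_inFact w m V i :
  factorization (wsuffix w m) V -> inFact w (V i).
Proof.
move=> [V_pos V_def]; split; first exact: V_pos.
exists (m + \sum_(j < i) size (V j)); rewrite [in LHS]V_def.
by apply: eq_map => k; rewrite /wsuffix addnA.
Qed.

Lemma phi_false u : phi u = false -> inFact xword u.
Proof. by rewrite /phi; case: excluded_middle_informative. Qed.

Lemma phi_inFact u : inFact xword u -> phi u = false.
Proof. by rewrite /phi; case: excluded_middle_informative. Qed.

Lemma ultra_monoP col V : ultra_mono col V -> exists c,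
  (forall i, col (V i) = c) /\
  (forall a b d, a < b < d -> [/\ col (V a ++ V b ++ V d) = c,
     col (V b ++ V d ++ V a) = c & col (V d ++ V a ++ V b) = c]).
Proof.
move=> [c mono]; exists c; split=> [i | a b d /andP [ab bd]].
  have enum1 : enum 'I_1 = [:: ord0] by apply: (inj_map val_inj); rewrite val_enum_ord.
  have := mono 1 (fun=> i) 1%g erefl; rewrite enum1 /= cats0; apply.
  by move=> j k; rewrite (ord1 j) (ord1 k).
have enum3 : enum 'I_3 = [:: inord 0; inord 1; inord 2].
  by apply: (inj_map val_inj); rewrite val_enum_ord /= !inordK.
pose n (j : 'I_3) := nth 0 [:: a; b; d] j.
have n_incr (j k : 'I_3) : j < k -> n j < n k.
  case: j k => -[|[|[|?]]] ? [[|[|[|?]]] ?] //= _; rewrite /n /=; lia.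
pose rot := perm (@ordS_inj 3).
split.
- by have := mono 3 n 1%g erefl n_incr; rewrite enum3 /= !perm1 /n /= !inordK //= cats0.
- by have := mono 3 n rot erefl n_incr; rewrite enum3 /= !permE /n /= !inordK //= cats0.
- have := mono 3 n (rot * rot)%g erefl n_incr.
  by rewrite enum3 /= !permM !permE /n /= !inordK //= cats0.
Qed.

Theorem mainTheorem13 :
  forall m : nat, ~ exists V : nat -> seq bool,
    factorization (wsuffix xword m) V /\ ultra_mono phi V.
Proof.
move=> m [V [fact_V /ultra_monoP [c [mono1 mono3]]]].
have c0 : c = false
  by rewrite -(mono1 0) (phi_inFact (factorization_suffix_inFact 0 fact_V)).
have zero_block N : exists2 i, N <= i & false \in V i.
  have [q q_ge xq] := xword_zero_beyond (m + \sum_(j < N) size (V j)).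
  have [|i N_le] := @factorization_mem _ _ N (q - m) fact_V; first lia.
  by rewrite /wsuffix subnKC ?xq => [V_q|]; [exists i | lia].
have [a _ A0] := zero_block 0.
have [b ab B0] := zero_block a.+1.
have [d bd D0] := zero_block b.+1.
have [/phi_false ABD /phi_false BDA /phi_false DAB] : [/\ phi (V a ++ V b ++ V d) = false,
    phi (V b ++ V d ++ V a) = false & phi (V d ++ V a ++ V b) = false].
  by rewrite -c0; apply: mono3; rewrite ab.
have := inFact_xword_gap_lt A0 B0 D0 ABD.
have := inFact_xword_gap_lt B0 D0 A0 BDA.
have := inFact_xword_gap_lt D0 A0 B0 DAB.
lia.
Qed.
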